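(* Let $\delta > 0$. There is a function $\epsilon \colon B_{\delta}(\vec 0) \to \mathbb R$ such that for all $\vec \theta \in B_{\delta}(\vec 0)$, \[ \operatorname{Re}(\Phi(\vec \theta)) = e^{-\frac{1}{2} \vec \theta^T M \vec \theta} (1 + \epsilon(\vec \theta)) \] and $|\epsilon(\vec \theta)| \leq \frac{1}{6} (d \delta)^4 e^{\frac{1}{2} d^2 \delta^2}$. Moreover, for all $\vec\theta\in B_\delta(\vec 0)$, \[ |\operatorname{Im}(\Phi(\vec \theta))| \leq \frac{(d \delta)^3}{6}. \] Further, if $d \delta < 1$, then $\operatorname{Re}(\Phi(\vec \theta)) > 1/3$ for all $\vec\theta\in B_\delta(\vec 0)$.
   Context: Let $g\ge 2$, $k\ge 2$ be integers, $\mathbb Z_g$ the integers mod $g$, and $d=\binom{k}{2}(g-1)$. Index the coordinates of $\mathbb R^d$ by pairs $(\{i,j\},a)$ with $1\le i<j\le k$ and $a\in\mathbb Z_g\setminus\{0\}$. Define $Z:(\mathbb Z_g)^k\to\mathbb R^d$ by $[Z(\vec x)]_{\{i,j\},a}=1-1/g$ if $x_i-x_j=a$ and $-1/g$ otherwise, and $\Phi(\vec\theta)=\sum_{\vec x\in(\mathbb Z_g)^k} g^{-k}e^{i\vec\theta\cdot Z(\vec x)}$. Let $B_\delta(\vec 0)=\{\vec\mu\in[-\pi,\pi)^d: \vec\mu\equiv\vec\zeta \pmod{2\pi}$ componentwise, for some $\vec\zeta$ with $|\zeta_{\{i,j\},a}|<\delta$ for all coordinates$\}$. Let $M$ be the $d\times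 d$ matrix indexed like $\mathbb R^d$ with $M_{(\{i,j\},a),(\{m,n\},b)}=\frac{g-1}{g^2}$ if $\{i,j\}=\{m,n\}$ and $a=b$; $-\frac{1}{g^2}$ if $\{i,j\}=\{m,n\}$ and $a\ne b$; and $0$ if $\{i,j\}\ne\{m,n\}$. *)

From HB Require Import structures.
From mathcomp Require Import all_boot all_order all_algebra.
From mathcomp Require Import all_classical all_reals.
From mathcomp Require Import sequences exp trigo.
From mathcomp Require Import complex.
Set Implicit Arguments. Unset Strict Implicit. Unset Printing Implicit Defensive.
Import Order.TTheory GRing.Theory Num.Theory.
Local Open Scope ring_scope.

(* Coordinate index set of R^d: pairs ({i,j}, a) with i < j in 'I_k
   (0-based version of 1 <= i < j <= k) and a in Z_g \ {0}.
   'Z_g is used only under the hypothesis 2 <= g. *)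
Definition Idx (k g : nat) : finType :=
  {c : ('I_k * 'I_k) * 'Z_g | (c.1.1 < c.1.2)%N && (c.2 != 0)}.

Definition pairOf k g (c : Idx k g) : 'I_k * 'I_k := (val c).1.
Definition valOf k g (c : Idx k g) : 'Z_g := (val c).2.

Definition dimd (k g : nat) : nat := 'C(k, 2) * (g - 1).

Definition Zvec (R : realType) k g (x : {ffun 'I_k -> 'Z_g}) (c : Idx k g) : R :=
  if x (pairOf c).1 - x (pairOf c).2 == valOf c then 1 - 1 / g%:R else - (1 / g%:R).

Definition dotp (R : realType) k g (th : Idx k g -> R) (v : Idx k g -> R) : R :=
  \sum_(c : Idx k g) th c * v c.

Definition cexpi (R : realType) (t : R) : R[i] := (cos t +i* sin t)%C.

Definition Phi (R : realType) k g (th : Idx k g -> R) : R[i] :=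
  \sum_(x : {ffun 'I_k -> 'Z_g}) ((g%:R ^- k : R)%:C * cexpi (@dotp R k g th (@Zvec R k g x)))%C.

Definition Mmat (R : realType) k g (c c' : Idx k g) : R :=
  if pairOf c == pairOf c' then
    (if valOf c == valOf c' then (g%:R - 1) / (g%:R ^+ 2) else - (1 / g%:R ^+ 2))
  else 0.

Definition quadM (R : realType) k g (th : Idx k g -> R) : R :=
  \sum_(c : Idx k g) \sum_(c' : Idx k g) th c * @Mmat R k g c c' * th c'.

Definition inB (R : realType) k g (delta : R) (th : Idx k g -> R) : Prop :=
  (forall c, - pi <= th c < pi) /\
  exists zeta : Idx k g -> R,
    forall c, (exists n : int, th c = zeta c + n%:~R * (2 * pi)) /\ `|zeta c| < delta.

From HB Require Import structures.
From mathcomp Require Import all_boot all_order all_algebra.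
From mathcomp Require Import all_classical all_reals.
From mathcomp Require Import sequences exp trigo complex.
From mathcomp Require topology normedtype derive.
From mathcomp Require Import ring lra zify.
Import Order.TTheory GRing.Theory Num.Theory.
Local Open Scope ring_scope.

(* Phi(theta) is the characteristic function E[exp(i t)] of t = theta . Z(x) for x
   uniform on (Z_g)^k.  The vector Z(x) is centred with covariance M: averaging over
   all shifts of a single coordinate x_u kills every coordinate ({i,j},a) with
   u in {i,j}, and every product of two coordinates whose pairs differ, since one can
   choose u in one pair but not in the other.  So t has mean 0 and variance
   theta^T M theta =: q, and |t| <= d delta because |Z| <= 1 and |theta_c| <= delta on
   B_delta(0).  The Taylor bounds x - x^3/6 <= sin x <= x and
   1 - x^2/2 <= cos x <= 1 - x^2/2 + x^4/24 (x >= 0) then give |Im Phi| <= (d delta)^3/6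
   and Re Phi = 1 - q/2 + O((d delta)^4/24), to be compared with
   exp(-q/2) = 1 - q/2 + O(q^2/8). *)

Section TaylorBounds.
Import topology normedtype derive numFieldNormedType.Exports.
Variable R : realType.
Implicit Types x y u : R.

Lemma ger0_is_derive_ndecr0 (f df : R -> R) :
  (forall x, is_derive x 1 f (df x)) -> (forall x, 0 <= x -> 0 <= df x) ->
  forall x, 0 <= x -> f 0 <= f x.
Proof.
move=> f_df df_ge0 x x_ge0.
have f_cont : continuous f.
  by move=> y; apply/differentiable_continuous/derivable1_diffP/ex_derive.
have [c] := MVT_segment x_ge0 (fun y _ => f_df y) (continuous_subspaceT f_cont).
rewrite in_itv /= => /andP[c_ge0 _] f_mvt.
by rewrite -subr_ge0 f_mvt mulr_ge0 ?df_ge0 // subr0.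
Qed.

Lemma sin_le_id x : 0 <= x -> sin x <= x.
Proof.
move=> x_ge0; suff : (fun t => t - sin t) 0 <= (fun t => t - sin t) x.
  by rewrite /= sin0 subr0 subr_ge0.
apply: (@ger0_is_derive_ndecr0 _ (fun t => 1 - cos t)) => // y _.
by rewrite subr_ge0 cos_le1.
Qed.

Lemma cos_ge_taylor2 x : 0 <= x -> 1 - x ^+ 2 / 2 <= cos x.
Proof.
have df y : is_derive y 1 (fun t => cos t - 1 + t ^+ 2 / 2) (y - sin y).
  by apply: is_derive_eq; rewrite /GRing.scale /=; field.
move=> x_ge0; suff : (fun t => cos t - 1 + t ^+ 2 / 2) 0 <= (fun t => cos t - 1 + t ^+ 2 / 2) x.
  by rewrite /= cos0 expr0n /= mul0r subrr addr0; lra.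
apply: (@ger0_is_derive_ndecr0 _ (fun t => t - sin t) df) => // y y_ge0.
by rewrite subr_ge0 sin_le_id.
Qed.

Lemma sin_ge_taylor3 x : 0 <= x -> x - x ^+ 3 / 6 <= sin x.
Proof.
have df y : is_derive y 1 (fun t => sin t - t + t ^+ 3 / 6) (cos y - 1 + y ^+ 2 / 2).
  by apply: is_derive_eq; rewrite /GRing.scale /=; field.
move=> x_ge0; suff : (fun t => sin t - t + t ^+ 3 / 6) 0 <= (fun t => sin t - t + t ^+ 3 / 6) x.
  by rewrite /= sin0 expr0n /= mul0r subrr addr0; lra.
apply: (@ger0_is_derive_ndecr0 _ (fun t => cos t - 1 + t ^+ 2 / 2) df) => // y /cos_ge_taylor2.
lra.
Qed.

Lemma cos_le_taylor4 x : 0 <= x -> cos x <= 1 - x ^+ 2 / 2 + x ^+ 4 / 24.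
Proof.
have df y : is_derive y 1 (fun t => 1 - t ^+ 2 / 2 + t ^+ 4 / 24 - cos t)
                          (sin y - y + y ^+ 3 / 6).
  by apply: is_derive_eq; rewrite /GRing.scale /=; field.
move=> x_ge0; suff : (fun t => 1 - t ^+ 2 / 2 + t ^+ 4 / 24 - cos t) 0
                     <= (fun t => 1 - t ^+ 2 / 2 + t ^+ 4 / 24 - cos t) x.
  by rewrite /= cos0 !expr0n /= !mul0r subr0 addr0 subrr; lra.
apply: (@ger0_is_derive_ndecr0 _ (fun t => sin t - t + t ^+ 3 / 6) df) => // y /sin_ge_taylor3.
lra.
Qed.

Lemma expRN_le_taylor2 u : 0 <= u -> expR (- u) <= 1 - u + u ^+ 2 / 2.
Proof.
have df y : is_derive y 1 (fun t => expR t * (1 - t + t ^+ 2 / 2)) (expR y * (y ^+ 2 / 2)).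
  by apply: is_derive_eq; rewrite /GRing.scale /=; field.
move=> u_ge0; suff : (fun t => expR t * (1 - t + t ^+ 2 / 2)) 0
                     <= (fun t => expR t * (1 - t + t ^+ 2 / 2)) u.
  rewrite /= expR0 expr0n /= mul0r subr0 addr0 mul1r => h.
  by rewrite expRN -div1r ler_pdivrMr ?expR_gt0 // mulrC.
apply: (@ger0_is_derive_ndecr0 _ (fun t => expR t * (t ^+ 2 / 2)) df) => // y _.
by rewrite mulr_ge0 ?expR_ge0 // divr_ge0 ?sqr_ge0.
Qed.

Lemma norm_sin_sub_le y : `|sin y - y| <= `|y| ^+ 3 / 6.
Proof.
wlog y_ge0 : y / 0 <= y.
  move=> hw; have [/hw //|y_lt0] := leP 0 y.
  by have := hw (- y); rewrite sinN normrN -opprD normrN oppr_ge0; apply; rewrite ltW.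
have /sin_le_id := y_ge0; have /sin_ge_taylor3 := y_ge0 => ? ?.
rewrite ler0_norm ?ger0_norm //; lra.
Qed.

Lemma cos_taylor2_bounds y : 0 <= cos y - (1 - y ^+ 2 / 2) <= y ^+ 4 / 24.
Proof.
have y2 : `|y| ^+ 2 = y ^+ 2 := real_normK (num_real y).
have y4 : `|y| ^+ 4 = y ^+ 4 by rewrite -normrX ger0_norm // exprn_even_ge0.
have /cos_ge_taylor2 := normr_ge0 y; have /cos_le_taylor4 := normr_ge0 y.
rewrite cos_norm y2 y4 => ? ?; apply/andP; split; lra.
Qed.

End TaylorBounds.

Section WeightedMoments.
Context {R : realType} {T : finType} {p : T -> R}.
Hypotheses (p_ge0 : forall x, 0 <= p x) (p_sum1 : \sum_x p x = 1).
Context {t : T -> R} {A : R}.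
Hypothesis t_le : forall x, `|t x| <= A.

Lemma wsum_cst a : \sum_x p x * a = a.
Proof. by rewrite -mulr_suml p_sum1 mul1r. Qed.

Lemma ler_wsum (f h : T -> R) :
  (forall x, f x <= h x) -> \sum_x p x * f x <= \sum_x p x * h x.
Proof. by move=> fh; apply: ler_sum => x _; rewrite ler_wpM2l. Qed.

Lemma normX_le n x : `|t x| ^+ n <= A ^+ n.
Proof. by rewrite lerXn2r ?nnegrE ?(le_trans _ (t_le x)). Qed.

Lemma second_moment_le : \sum_x p x * t x ^+ 2 <= A ^+ 2.
Proof.
rewrite -[leRHS]wsum_cst; apply: ler_wsum => x.
by rewrite -real_normK ?num_real // normX_le.
Qed.

Lemma wsum_cos_taylor2_bounds :
  0 <= \sum_x p x * cos (t x) - (1 - (\sum_x p x * t x ^+ 2) / 2) <= A ^+ 4 / 24.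
Proof.
have -> : \sum_x p x * cos (t x) - (1 - (\sum_x p x * t x ^+ 2) / 2)
          = \sum_x p x * (cos (t x) - (1 - t x ^+ 2 / 2)).
  rewrite [RHS](eq_bigr (fun x => p x * cos (t x) - p x * 1 + p x * t x ^+ 2 / 2)).
    by rewrite big_split sumrB wsum_cst -mulr_suml /=; ring.
  by move=> x _; ring.
apply/andP; split.
  by apply: sumr_ge0 => x _; rewrite mulr_ge0 //; case/andP: (cos_taylor2_bounds _ (t x)).
rewrite -[leRHS]wsum_cst; apply: ler_wsum => x.
case/andP: (cos_taylor2_bounds _ (t x)) => _ /le_trans; apply.
rewrite -(ger0_norm (exprn_even_ge0 (t x) (erefl : ~~ odd 4))) normrX.
by apply: ler_wpM2r (normX_le _ _); rewrite invr_ge0.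
Qed.

Hypothesis t_mean0 : \sum_x p x * t x = 0.

Lemma norm_wsum_sin_le : `|\sum_x p x * sin (t x)| <= A ^+ 3 / 6.
Proof.
have -> : \sum_x p x * sin (t x) = \sum_x p x * (sin (t x) - t x).
  rewrite [RHS](eq_bigr (fun x => p x * sin (t x) - p x * t x)).
    by rewrite sumrB t_mean0 subr0.
  by move=> x _; rewrite mulrBr.
apply: (le_trans (ler_norm_sum _ _ _)); rewrite -[leRHS]wsum_cst.
apply: ler_sum => x _; rewrite normrM ger0_norm // ler_wpM2l //.
apply: (le_trans (norm_sin_sub_le _ _)).
by apply: ler_wpM2r (normX_le _ _); rewrite invr_ge0.
Qed.

End WeightedMoments.

Lemma expR_half_approx (R : realType) (P q D : R) :
  0 <= q <= D ^+ 2 -> 0 <= P - (1 - q / 2) <= D ^+ 4 / 24 ->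
  `|P * expR (q / 2) - 1| <= D ^+ 4 / 6 * expR (D ^+ 2 / 2).
Proof.
move=> /andP[q_ge0 q_le] /andP[P_lb P_ub].
have expRN_lb : 1 - q / 2 <= expR (- (q / 2)) by have := expR_ge1Dx (- (q / 2)); lra.
have expRN_ub : expR (- (q / 2)) <= 1 - q / 2 + q ^+ 2 / 8.
  have /expRN_le_taylor2 : 0 <= q / 2 by lra.
  by rewrite expr_div_n; lra.
have q2_le : q ^+ 2 <= D ^+ 4 by rewrite -[4%N]/(2 * 2)%N exprM lerXn2r ?nnegrE ?sqr_ge0.
have -> : P * expR (q / 2) - 1 = (P - expR (- (q / 2))) * expR (q / 2).
  by rewrite mulrBl -expRD addNr expR0.
rewrite normrM (ger0_norm (expR_ge0 _)); apply: ler_pM; rewrite ?expR_ge0 //.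
- by rewrite ler_norml; apply/andP; split; lra.
- by rewrite ler_expR; lra.
Qed.

Section CoordinateShift.
Context {I : finType} {V : finZmodType}.
Implicit Types (u v : I) (s : V) (x : {ffun I -> V}).

Definition shift_at u s x : {ffun I -> V} :=
  [ffun v => if v == u then x v + s else x v].

Lemma shift_at_inj u s : injective (shift_at u s).
Proof.
move=> x y /ffunP xy; apply/ffunP => v; have := xy v; rewrite !ffunE.
by case: (v == u) => // /addIr.
Qed.

Lemma sum_shift_at {M : nmodType} (F : {ffun I -> V} -> M) u :
  (\sum_x F x) *+ #|V| = \sum_x \sum_s F (shift_at u s x).
Proof.
rewrite exchange_big /= -sumr_const; apply: eq_bigr => s _.
by rewrite [LHS](reindex_inj (@shift_at_inj u s)).
Qed.

End CoordinateShift.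

Lemma sum_indicator_mul (R : pzSemiRingType) (T : finType) (a : T) (F : T -> R) :
  \sum_z (z == a)%:R * F z = F a.
Proof.
by rewrite (bigD1 a) //= eqxx mul1r big1 ?addr0 // => z /negbTE ->; rewrite mul0r.
Qed.

Lemma card_lt_pairs k : #|[pred p : 'I_k * 'I_k | (p.1 < p.2)%N]| = 'C(k, 2).
Proof.
rewrite -sum1_card.
rewrite -(pair_big_dep predT (fun i j : 'I_k => i < j)%N (fun _ _ => 1%N)) /=.
rewrite (exchange_big_dep predT) //=.
under eq_bigr => j _ do rewrite -(big_ord_widen k (fun _ => 1%N) (ltnW (ltn_ord j))) sum1_card card_ord.
by rewrite -(big_mkord predT (fun j => j)) bin2_sum.
Qed.

Lemma card_Idx k g : (2 <= g)%N -> #|Idx k g| = dimd k g.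
Proof.
move=> g_ge2; rewrite card_sig.
rewrite (eq_card (B := [predX [pred p : 'I_k * 'I_k | (p.1 < p.2)%N] & predC1 (0 : 'Z_g)])).
  by rewrite cardX cardC1 card_lt_pairs card_ord /dimd; case: g g_ge2 => [|[|]].
by case=> [[i j] a].
Qed.

Section ZvecMoments.
Context {R : realType} {g k : nat}.
Hypothesis g_ge2 : (2 <= g)%N.
Implicit Types (x : {ffun 'I_k -> 'Z_g}) (c : Idx k g) (a b : 'Z_g).

Definition centered_delta a b : R := (b == a)%:R - 1 / g%:R.

Lemma card_Zg : #|'Z_g| = g.
Proof. by rewrite card_ord; case: g g_ge2 => [|[|]]. Qed.

Lemma natr_g_neq0 : g%:R != 0 :> R.
Proof. by rewrite pnatr_eq0 -lt0n (leq_trans _ g_ge2). Qed.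

Lemma ZvecE x c : Zvec R x c = centered_delta (valOf c) (x (pairOf c).1 - x (pairOf c).2).
Proof. by rewrite /Zvec /centered_delta; case: eqP; rewrite ?add0r. Qed.

Lemma MmatE c c' : Mmat R c c' =
  if pairOf c == pairOf c' then centered_delta (valOf c') (valOf c) / g%:R else 0.
Proof.
have g_neq0 := natr_g_neq0.
by rewrite /Mmat /centered_delta; case: eqP => // _; case: eqP => _ /=; field.
Qed.

Lemma sum_centered_delta a : \sum_b centered_delta a b = 0.
Proof.
have -> : \sum_b centered_delta a b = \sum_b (b == a)%:R * 1 - (1 / g%:R) *+ g.
  by rewrite /centered_delta sumrB sumr_const card_Zg; under [in RHS]eq_bigr do rewrite mulr1.
by rewrite sum_indicator_mul -mulr_natr div1r mulVf ?subrr ?natr_g_neq0.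
Qed.

Lemma sum_centered_delta_inj a (e : 'Z_g -> 'Z_g) :
  injective e -> \sum_s centered_delta a (e s) = 0.
Proof. by move=> e_inj; rewrite -[RHS](sum_centered_delta a) [RHS](reindex_inj e_inj). Qed.

Lemma sum_centered_deltaM a b :
  \sum_z centered_delta a z * centered_delta b z = centered_delta b a.
Proof.
under eq_bigr do rewrite [centered_delta a _]/centered_delta mulrBl.
by rewrite sumrB sum_indicator_mul -mulr_sumr sum_centered_delta mulr0 subr0.
Qed.

Lemma pairOf_lt c : ((pairOf c).1 < (pairOf c).2)%N.
Proof. by case: c => [[[i j] a]] /= /andP[]. Qed.

Lemma pairOf_neq c : (pairOf c).2 != (pairOf c).1.
Proof. by rewrite -val_eqE gtn_eqF ?pairOf_lt. Qed.

Lemma pairOf_separated c c' : pairOf c != pairOf c' ->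
  exists2 u, (u == (pairOf c).1) || (u == (pairOf c).2)
           & (u != (pairOf c').1) && (u != (pairOf c').2).
Proof.
move: (pairOf_lt c) (pairOf_lt c'); case: (pairOf c) (pairOf c') => [i j] [m n] /= ij mn neq.
have [i_out|i_in] := boolP ((i != m) && (i != n)); first by exists i; rewrite ?eqxx.
exists j; first by rewrite eqxx orbT.
by move: neq i_in; rewrite xpair_eqE -!val_eqE /=; lia.
Qed.

Lemma sum_Zvec_shift_at x c u : (u == (pairOf c).1) || (u == (pairOf c).2) ->
  \sum_s Zvec R (shift_at u s x) c = 0.
Proof.
have ji := pairOf_neq c; have ij : (pairOf c).1 != (pairOf c).2 by rewrite eq_sym.
case/orP => /eqP ->.
- under eq_bigr do rewrite ZvecE !ffunE eqxx (negbTE ji).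
  by apply: sum_centered_delta_inj => s1 s2 /addIr /addrI.
- under eq_bigr do rewrite ZvecE !ffunE eqxx (negbTE ij).
  by apply: sum_centered_delta_inj => s1 s2 /addrI /oppr_inj /addrI.
Qed.

Lemma sum_shift_at_Zg (F : {ffun 'I_k -> 'Z_g} -> R) u :
  g%:R * \sum_x F x = \sum_x \sum_s F (shift_at u s x).
Proof. by have := sum_shift_at F u; rewrite card_Zg mulr_natl. Qed.

Lemma sum_Zvec c : \sum_x Zvec R x c = 0.
Proof.
apply: (mulfI natr_g_neq0); rewrite mulr0 (sum_shift_at_Zg _ (pairOf c).1).
by apply: big1 => x _; rewrite sum_Zvec_shift_at ?eqxx.
Qed.

Lemma sum_ZvecM_same c c' : pairOf c = pairOf c' ->
  \sum_x Zvec R x c * Zvec R x c' = g%:R ^+ k * (centered_delta (valOf c') (valOf c) / g%:R).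
Proof.
move=> same; have ji := pairOf_neq c; set i := (pairOf c).1; set j := (pairOf c).2.
have shifted x : \sum_s Zvec R (shift_at i s x) c * Zvec R (shift_at i s x) c'
                 = centered_delta (valOf c') (valOf c).
  under eq_bigr do rewrite !ZvecE -same !ffunE eqxx (negbTE ji).
  rewrite -sum_centered_deltaM [RHS](reindex_inj (h := fun s => x i + s - x j)) //.
  by move=> s1 s2 /addIr /addrI.
apply: (mulfI natr_g_neq0); rewrite (sum_shift_at_Zg _ i) (eq_bigr _ (fun x _ => shifted x)).
rewrite sumr_const card_ffun card_Zg card_ord -[LHS]mulr_natr natrX.
by move: natr_g_neq0 => g_neq0; field.
Qed.

Lemma sum_ZvecM_separated c c' : pairOf c != pairOf c' ->
  \sum_x Zvec R x c * Zvec R x c' = 0.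
Proof.
case/pairOf_separated => u u_in /andP[u_m u_n].
apply: (mulfI natr_g_neq0); rewrite mulr0 (sum_shift_at_Zg _ u); apply: big1 => x _.
under eq_bigr do rewrite [Zvec R _ c']ZvecE !ffunE eq_sym (negbTE u_m) eq_sym (negbTE u_n) -ZvecE.
by rewrite -mulr_suml sum_Zvec_shift_at ?mul0r.
Qed.

Lemma sum_ZvecM c c' : \sum_x Zvec R x c * Zvec R x c' = g%:R ^+ k * Mmat R c c'.
Proof.
rewrite MmatE; case: eqP => [/sum_ZvecM_same | /eqP/sum_ZvecM_separated] //.
by rewrite mulr0.
Qed.

End ZvecMoments.

Lemma Re_sum (R : rcfType) (I : finType) (F : I -> R[i]) :
  complex.Re (\sum_i F i) = \sum_i complex.Re (F i).
Proof. by apply: big_morph => // -[a b] [c e]. Qed.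

Lemma Im_sum (R : rcfType) (I : finType) (F : I -> R[i]) :
  complex.Im (\sum_i F i) = \sum_i complex.Im (F i).
Proof. by apply: big_morph => // -[a b] [c e]. Qed.

Lemma inB_norm_le (R : realType) k g (delta : R) (th : Idx k g -> R) :
  inB delta th -> forall c, `|th c| <= delta.
Proof.
(* A nonzero shift by 2 pi n would force |zeta_c| >= 2 pi - |theta_c| >= pi >= |theta_c|. *)
case=> th_range [z z_near] c; have [[n th_eq] z_lt] := z_near c.
have th_le_pi : `|th c| <= pi by rewrite ler_norml; case/andP: (th_range c) => -> /ltW ->.
have [n0|n_neq0] := eqVneq n 0; first by rewrite th_eq n0 mul0r addr0 ltW.
have two_pi_le : 2 * pi <= `|th c - z c|.
  rewrite th_eq addrC addKr normrM [`|2 * pi|]ger0_norm ?mulr_ge0 ?pi_ge0 //.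
  by rewrite ler_peMl ?mulr_ge0 ?pi_ge0 // -intr_norm ler1z -gtz0_ge1 normr_gt0.
have := ler_normB (th c) (z c); lra.
Qed.

Section PhiMoments.
Context {R : realType} {g k : nat}.
Hypothesis g_ge2 : (2 <= g)%N.
Context {th : Idx k g -> R}.
Implicit Types (x : {ffun 'I_k -> 'Z_g}).

Lemma norm_Zvec_le1 x c : `|Zvec R x c| <= 1.
Proof.
have g_ge2R : 2 <= g%:R :> R by rewrite (ler_nat R 2 g).
have inv_g_ge0 : 0 <= 1 / g%:R :> R by rewrite divr_ge0 //; lra.
have inv_g_le1 : 1 / g%:R <= 1 :> R by rewrite div1r invf_le1; lra.
by rewrite /Zvec; case: ifP => _; rewrite ?normrN ger0_norm; lra.
Qed.

Lemma norm_dotp_Zvec_le delta x : (forall c, `|th c| <= delta) ->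
  `|dotp th (Zvec R x)| <= (dimd k g)%:R * delta.
Proof.
move=> th_le; rewrite -(card_Idx _ _ g_ge2) mulr_natl -sumr_const /dotp.
apply: (le_trans (ler_norm_sum _ _ _)); apply: ler_sum => c _.
by rewrite normrM -[leRHS]mulr1 ler_pM ?norm_Zvec_le1.
Qed.

Lemma sum_dotp_Zvec : \sum_x dotp th (Zvec R x) = 0.
Proof.
rewrite /dotp exchange_big /=; apply: big1 => c _.
by rewrite -mulr_sumr sum_Zvec ?mulr0.
Qed.

Lemma sum_dotp_Zvec_sqr : \sum_x dotp th (Zvec R x) ^+ 2 = g%:R ^+ k * quadM th.
Proof.
rewrite /dotp /quadM mulr_sumr.
under eq_bigr do rewrite expr2 mulr_suml; under eq_bigr do under eq_bigr do rewrite mulr_sumr.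
rewrite exchange_big /=; apply: eq_bigr => c _.
rewrite exchange_big /= mulr_sumr; apply: eq_bigr => c' _.
under eq_bigr do rewrite mulrACA.
by rewrite -mulr_sumr sum_ZvecM //; ring.
Qed.

Lemma uniform_sum1 : \sum_(x : {ffun 'I_k -> 'Z_g}) g%:R ^- k = 1 :> R.
Proof.
rewrite sumr_const card_ffun card_Zg // card_ord -[LHS]mulr_natr natrX mulVf //.
by rewrite expf_neq0 // natr_g_neq0.
Qed.

Lemma Phi_moment_bounds A : (forall x, `|dotp th (Zvec R x)| <= A) ->
  [/\ 0 <= quadM th <= A ^+ 2,
      0 <= complex.Re (Phi th) - (1 - quadM th / 2) <= A ^+ 4 / 24
    & `|complex.Im (Phi th)| <= A ^+ 3 / 6].
Proof.
move=> t_le.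
have w_ge0 (x : {ffun 'I_k -> 'Z_g}) : 0 <= g%:R ^- k :> R by rewrite invr_ge0 exprn_ge0.
have w_sum1 := uniform_sum1.
have Re_Phi : complex.Re (Phi th) = \sum_x g%:R ^- k * cos (dotp th (Zvec R x)).
  by rewrite Re_sum; apply: eq_bigr => x _ /=; ring.
have Im_Phi : complex.Im (Phi th) = \sum_x g%:R ^- k * sin (dotp th (Zvec R x)).
  by rewrite Im_sum; apply: eq_bigr => x _ /=; ring.
have quadM_wsum : quadM th = \sum_x g%:R ^- k * dotp th (Zvec R x) ^+ 2.
  by rewrite -mulr_sumr sum_dotp_Zvec_sqr mulKf // expf_neq0 // natr_g_neq0.
have mean0 : \sum_x g%:R ^- k * dotp th (Zvec R x) = 0.
  by rewrite -mulr_sumr sum_dotp_Zvec mulr0.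
split.
- rewrite quadM_wsum (second_moment_le w_ge0 w_sum1 t_le) andbT.
  by apply: sumr_ge0 => x _; apply: mulr_ge0 (w_ge0 x) (sqr_ge0 _).
- by rewrite Re_Phi quadM_wsum; apply: (wsum_cos_taylor2_bounds w_ge0 w_sum1 t_le).
- by rewrite Im_Phi; apply: (norm_wsum_sin_le w_ge0 w_sum1 t_le mean0).
Qed.

End PhiMoments.

Theorem lemma4p5 (R : realType) (g k : nat) (hg : (2 <= g)%N) (hk : (2 <= k)%N)
  (delta : R) (hdelta : 0 < delta) :
  let d : R := (dimd k g)%:R in
  (exists eps : (Idx k g -> R) -> R,
     forall th : Idx k g -> R, inB delta th ->
       complex.Re (Phi th) = expR (- (1 / 2) * quadM th) * (1 + eps th) /\
       `|eps th| <= 1 / 6 * (d * delta) ^+ 4 * expR (1 / 2 * d ^+ 2 * delta ^+ 2)) /\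
  (forall th : Idx k g -> R, inB delta th ->
       `|complex.Im (Phi th)| <= (d * delta) ^+ 3 / 6) /\
  (d * delta < 1 ->
     forall th : Idx k g -> R, inB delta th -> 1 / 3 < complex.Re (Phi th)).
Proof.
move=> d; have dd_ge0 : 0 <= d * delta by rewrite mulr_ge0 ?ler0n ?ltW.
have bounds (th : Idx k g -> R) : inB delta th -> [/\ 0 <= quadM th <= (d * delta) ^+ 2,
    0 <= complex.Re (Phi th) - (1 - quadM th / 2) <= (d * delta) ^+ 4 / 24
  & `|complex.Im (Phi th)| <= (d * delta) ^+ 3 / 6].
  by move=> /inB_norm_le th_le; apply: (Phi_moment_bounds hg) => x; apply: norm_dotp_Zvec_le.
split; [|split].
- exists (fun th => complex.Re (Phi th) * expR (quadM th / 2) - 1) => th /bounds[q_bd Re_bd _].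
  split.
    have half_cancel : - (1 / 2) * quadM th + quadM th / 2 = 0 by ring.
    by rewrite addrC subrK mulrCA -expRD half_cancel expR0 mulr1.
  have -> : 1 / 6 * (d * delta) ^+ 4 * expR (1 / 2 * d ^+ 2 * delta ^+ 2)
            = (d * delta) ^+ 4 / 6 * expR ((d * delta) ^+ 2 / 2).
    by rewrite exprMn; congr (_ * expR _); ring.
  exact: expR_half_approx.
- by move=> th /bounds[].
- move=> dd_lt1 th /bounds[/andP[_ q_le] /andP[Re_lb _] _].
  have : (d * delta) ^+ 2 <= d * delta by rewrite expr2 ler_piMl // ltW.
  lra.
Qed.
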